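(* Assume $a/b>\sqrt2$ and let $u$ satisfy $|u|<u_{\max}$. Then the four vertices $P_1,P_2,P_3,P_4$ of the self-intersected 4-periodic with parameter $u$ and the two foci $f_1=(-c,0)$, $f_2=(c,0)$ lie on the circle with center $$C=\left(0,\ \frac{c^2u^2-a^2+2b^2}{2b\sqrt{1-u^2}}\right)\quad\text{and radius}\quad R=\frac{a^2-c^2u^2}{2b\sqrt{1-u^2}}.$$ Moreover, whenever $a^2+(u^2-2)c^2\neq 0$, the four vertices of the outer polygon and the two foci lie on the circle with center $$C'=\left(0,\ -\frac{2bc^2\sqrt{1-u^2}}{a^2+(u^2-2)c^2}\right)\quad\text{and radius}\quad |R'|,\qquad R'=\frac{c\,(c^2u^2-a^2)}{a^2+(u^2-2)c^2}.$$
   Context: The elliptic billiard is $\mathcal{E}: x^2/a^2+y^2/b^2=1$, $a>b>0$, $c=\sqrt{a^2-b^2}$, foci $f_1=(-c,0)$, $f_2=(c,0)$. For $a/b>\sqrt2$ the self-intersected 4-periodics (closed 4-bounce billiard trajectories tangent to the confocal hyperbola $x^2/a''^2-y^2/b''^2=1$, $a''=a\sqrt{a^2-2b^2}/c$, $b''=b^2/c$) are parametrized by $u$ with $|u|\le u_{\max}:=\frac{a}{c^2}\sqrt{a^2-2b^2}$: $P_1=(au,\,b\sqrt{1-u^2})$, $P_3=(-au,\,b\sqrt{1-u^2})$, $P_2=\left(-\frac{a\sqrt{a^2(a^2-2b^2)-c^4u^2}}{c^2\sqrt{1-u^2}},\,-\frac{b^3}{c^2\sqrt{1-u^2}}\right)$,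 $P_4=\left(\frac{a\sqrt{a^2(a^2-2b^2)-c^4u^2}}{c^2\sqrt{1-u^2}},\,-\frac{b^3}{c^2\sqrt{1-u^2}}\right)$. The outer polygon has vertices $P_i'$, $i=1,\dots,4$, where $P_i'$ is the intersection point of the tangent lines to $\mathcal{E}$ at $P_i$ and at $P_{i+1}$ (indices mod 4). *)

From Stdlib Require Import Reals.
Open Scope R_scope.

(* Elliptic billiard x^2/a^2 + y^2/b^2 = 1, c = sqrt(a^2-b^2). *)
Definition cfoc (a b : R) : R := sqrt (a^2 - b^2).

Definition umax (a b : R) : R := a / (cfoc a b)^2 * sqrt (a^2 - 2*b^2).

Definition P1 (a b u : R) : R * R := (a*u, b * sqrt (1 - u^2)).
Definition P3 (a b u : R) : R * R := (- (a*u), b * sqrt (1 - u^2)).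
Definition P2 (a b u : R) : R * R :=
  let c := cfoc a b in
  (- (a * sqrt (a^2*(a^2 - 2*b^2) - c^4*u^2) / (c^2 * sqrt (1 - u^2))),
   - (b^3 / (c^2 * sqrt (1 - u^2)))).
Definition P4 (a b u : R) : R * R :=
  let c := cfoc a b in
  (a * sqrt (a^2*(a^2 - 2*b^2) - c^4*u^2) / (c^2 * sqrt (1 - u^2)),
   - (b^3 / (c^2 * sqrt (1 - u^2)))).

Definition on_tangent (a b : R) (P Q : R * R) : Prop :=
  fst Q * fst P / a^2 + snd Q * snd P / b^2 = 1.

Definition tangent_intersection (a b : R) (P P' Q : R * R) : Prop :=
  on_tangent a b P Q /\ on_tangent a b P' Q.

Definition on_circle (C : R * R) (r : R) (Q : R * R) : Prop :=
  (fst Q - fst C)^2 + (snd Q - snd C)^2 = r^2.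

From Stdlib Require Import Reals Lra.
Open Scope R_scope.

(* A circle whose centre (0,k) lies on the minor axis passes
   through both foci iff its squared radius is c^2 + k^2; a point (x,y) then
   lies on it iff x^2 + y^2 - 2ky = c^2 (a "focal circle").
   - For a point of the ellipse this condition becomes the quadratic
     c^2 y^2 + 2 k b^2 y = b^4 in the height y alone.  The upper vertices
     P1, P3 have height b s and the lower ones P2, P4 height -b^3/(c^2 s)
     (s = sqrt(1-u^2)); these heights have product -b^4/c^2, so by Vieta they
     are the two roots for k = -c^2 (y1 + y2)/(2 b^2), which is the claimed
     centre.  This gives the inner circle.
   - Every outer vertex is the intersection of the tangents at an upper and a
     lower vertex; Cramer's rule gives its coordinates, and the focal-circle
     condition reduces to an explicit polynomial identity (outer_vertex_identity)
     modulo the relation satisfied by the vertex coordinates. *)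

Definition on_ellipse (a b : R) (Q : R * R) : Prop :=
  b^2 * fst Q ^ 2 + a^2 * snd Q ^ 2 = a^2 * b^2.

Definition focal_circle (c k : R) (Q : R * R) : Prop :=
  fst Q ^ 2 + snd Q ^ 2 - 2 * k * snd Q = c^2.

Lemma focal_circle_on_circle (c k r : R) (Q : R * R) :
  r^2 = c^2 + k^2 -> focal_circle c k Q -> on_circle (0, k) r Q.
Proof.
  destruct Q as [x y]; unfold focal_circle, on_circle; cbn [fst snd]; intros hr hQ.
  rewrite hr. replace ((x - 0)^2 + (y - k)^2) with (x^2 + y^2 - 2*k*y + k^2) by ring.
  lra.
Qed.

Lemma focus_on_focal_circle (c k x : R) : x^2 = c^2 -> focal_circle c k (x, 0).
Proof. unfold focal_circle; cbn [fst snd]; intros hx. rewrite <- hx; ring. Qed.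

Lemma ellipse_point_on_focal_circle (a b c k : R) (Q : R * R) :
  b <> 0 -> c^2 = a^2 - b^2 -> on_ellipse a b Q ->
  c^2 * snd Q ^ 2 + 2*k*b^2 * snd Q = b^4 -> focal_circle c k Q.
Proof.
  destruct Q as [x y]; unfold on_ellipse, focal_circle; cbn [fst snd]; intros hb hc2 hE hy.
  apply Rmult_eq_reg_l with (b^2); [| apply pow_nonzero; exact hb].
  replace (b^2 * (x^2 + y^2 - 2*k*y))
    with ((b^2*x^2 + a^2*y^2) - (a^2 - b^2)*y^2 - 2*k*b^2*y) by ring.
  rewrite hE, <- hc2. replace (b^2 * c^2) with (b^2 * (a^2 - b^2)) by (rewrite hc2; ring).
  lra.
Qed.

(* Vieta: given the product of the two heights, the centre height k determined
   by their sum makes each of them a root of c^2 y^2 + 2 k b^2 y = b^4. *)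
Lemma focal_height_root (b c k y1 y2 : R) :
  c^2 * (y1 * y2) = - b^4 -> 2*k*b^2 = - (c^2 * (y1 + y2)) ->
  c^2 * y1^2 + 2*k*b^2 * y1 = b^4.
Proof.
  intros hprod hsum. rewrite hsum.
  replace (c^2 * y1^2 + - (c^2 * (y1 + y2)) * y1) with (- (c^2 * (y1 * y2))) by ring.
  lra.
Qed.

Lemma tangent_intersection_coords (a b x1 y1 x2 y2 X Y : R) :
  a <> 0 -> b <> 0 -> y1 <> y2 ->
  on_tangent a b (x1, y1) (X, Y) -> on_tangent a b (x2, y2) (X, Y) ->
  x1*y2 - x2*y1 <> 0 /\
  X = a^2 * (y2 - y1) / (x1*y2 - x2*y1) /\ Y = b^2 * (x1 - x2) / (x1*y2 - x2*y1).
Proof.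
  unfold on_tangent; cbn [fst snd]; intros ha hb hy h1 h2.
  assert (e1 : b^2*X*x1 + a^2*Y*y1 = a^2*b^2).
  { replace (b^2*X*x1 + a^2*Y*y1) with (a^2*b^2 * (X*x1/a^2 + Y*y1/b^2)) by (field; auto).
    rewrite h1; ring. }
  assert (e2 : b^2*X*x2 + a^2*Y*y2 = a^2*b^2).
  { replace (b^2*X*x2 + a^2*Y*y2) with (a^2*b^2 * (X*x2/a^2 + Y*y2/b^2)) by (field; auto).
    rewrite h2; ring. }
  assert (hX : b^2 * (X * (x1*y2 - x2*y1)) = b^2 * (a^2 * (y2 - y1))).
  { replace (b^2 * (X * (x1*y2 - x2*y1))) with (y2 * (b^2*X*x1 + a^2*Y*y1) - y1 * (b^2*X*x2 + a^2*Y*y2)) by ring.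
    rewrite e1, e2; ring. }
  assert (hY : a^2 * (Y * (x1*y2 - x2*y1)) = a^2 * (b^2 * (x1 - x2))).
  { replace (a^2 * (Y * (x1*y2 - x2*y1))) with (x1 * (b^2*X*x2 + a^2*Y*y2) - x2 * (b^2*X*x1 + a^2*Y*y1)) by ring.
    rewrite e1, e2; ring. }
  apply Rmult_eq_reg_l in hX; [| apply pow_nonzero; exact hb].
  apply Rmult_eq_reg_l in hY; [| apply pow_nonzero; exact ha].
  assert (hD : x1*y2 - x2*y1 <> 0).
  { intros hD. rewrite hD, Rmult_0_r in hX. apply hy.
    symmetry in hX. apply Rmult_integral in hX as [h | h];
      [apply (pow_nonzero a 2) in ha; contradiction | lra]. }
  split; [exact hD | split].
  - rewrite <- hX. field. exact hD.
  - rewrite <- hY. field. exact hD.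
Qed.

(* The polynomial identity behind the outer circle: for an outer vertex built
   from the parameters (v,t), the focal-circle defect (times W^2, with
   W = v b^2 + t s) is a combination of the vertex relation
   t^2 - b^2 c^2 v^2 = a^2 (c^2 s^2 - b^2) and of the centre equation
   k (c^2 s^2 - b^2) = 2 b c^2 s. *)
Lemma outer_vertex_identity (a b c s v t k : R) :
  a^2*(b^2 + c^2*s^2)^2 + b^2*(v*c^2*s - t)^2
    + 2*k*b*(v*c^2*s - t)*(v*b^2 + t*s) - c^2*(v*b^2 + t*s)^2
  = (b^2 - c^2*s^2 - 2*k*b*s) * (t^2 - b^2*c^2*v^2 - a^2*(c^2*s^2 - b^2))
    + 2*b*(v*t - a^2*s) * (k*(c^2*s^2 - b^2) - 2*b*c^2*s).
Proof. ring. Qed.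

(* The 4-periodic, written with s = sqrt(1-u^2) and S = sqrt(a^2(a^2-2b^2) - c^4 u^2):
   the upper vertices are (a v, b s) with v = +-u, the lower ones
   (a t/(c^2 s), -b^3/(c^2 s)) with t = +-S. *)
Section SelfIntersectedFourPeriodic.

Variables a b c u s S : R.
Hypotheses (ha : 0 < a) (hb : 0 < b) (hc : 0 < c) (hs : 0 < s).
Hypothesis hc2 : c^2 = a^2 - b^2.
Hypothesis hs2 : s^2 = 1 - u^2.
Hypothesis hS2 : S^2 = a^2*(a^2 - 2*b^2) - c^4*u^2.

Definition upper_vertex (v : R) : R * R := (a*v, b*s).
Definition lower_vertex (t : R) : R * R := (a*t/(c^2*s), - (b^3/(c^2*s))).

Definition inner_center : R := (c^2*u^2 - a^2 + 2*b^2) / (2*b*s).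
Definition inner_radius : R := (a^2 - c^2*u^2) / (2*b*s).
Definition outer_center : R := - (2*b*c^2*s) / (a^2 + (u^2 - 2)*c^2).
Definition outer_radius : R := c * (c^2*u^2 - a^2) / (a^2 + (u^2 - 2)*c^2).

Lemma vertex_gap : a^2 - c^2*u^2 = b^2 + c^2*s^2.
Proof. rewrite hs2. lra. Qed.

Lemma outer_denominator : a^2 + (u^2 - 2)*c^2 = - (c^2*s^2 - b^2).
Proof. rewrite hs2. lra. Qed.

Lemma lower_vertex_relation (t : R) : t^2 = S^2 -> t^2 + b^4 = c^4 * s^2.
Proof.
  intros ht. rewrite ht, hS2, hs2.
  replace (c^4) with ((c^2)^2) by ring. rewrite hc2. ring.
Qed.

Lemma tangent_vertex_relation (v t : R) : v^2 = u^2 -> t^2 = S^2 ->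
  t^2 - b^2*c^2*v^2 = a^2*(c^2*s^2 - b^2).
Proof.
  intros hv ht. rewrite ht, hv, hS2, hs2.
  replace (c^4) with ((c^2)^2) by ring. rewrite hc2. ring.
Qed.

Lemma upper_vertex_on_ellipse (v : R) : v^2 = u^2 -> on_ellipse a b (upper_vertex v).
Proof.
  unfold on_ellipse, upper_vertex; cbn [fst snd]; intros hv.
  replace (b^2 * (a*v)^2 + a^2 * (b*s)^2) with (a^2*b^2*(v^2 + s^2)) by ring.
  rewrite hv, hs2. ring.
Qed.

Lemma lower_vertex_on_ellipse (t : R) : t^2 = S^2 -> on_ellipse a b (lower_vertex t).
Proof.
  unfold on_ellipse, lower_vertex; cbn [fst snd]; intros ht.
  replace (b^2 * (a*t/(c^2*s))^2 + a^2 * (- (b^3/(c^2*s)))^2)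
    with (a^2*b^2 * ((t^2 + b^4) / (c^4*s^2))) by (field; lra).
  rewrite (lower_vertex_relation t ht). field. lra.
Qed.

Lemma vertex_heights_product : c^2 * ((b*s) * (- (b^3/(c^2*s)))) = - b^4.
Proof. field. lra. Qed.

Lemma inner_center_sum : 2*inner_center*b^2 = - (c^2 * ((b*s) + - (b^3/(c^2*s)))).
Proof.
  unfold inner_center.
  replace (c^2*u^2 - a^2 + 2*b^2) with (b^2 - c^2*s^2) by (pose proof vertex_gap; lra).
  field. lra.
Qed.

Lemma inner_radius_focal : inner_radius^2 = c^2 + inner_center^2.
Proof.
  unfold inner_radius, inner_center. rewrite vertex_gap.
  replace (c^2*u^2 - a^2 + 2*b^2) with (b^2 - c^2*s^2) by (pose proof vertex_gap; lra).
  field. lra.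
Qed.

Lemma upper_vertex_on_inner_circle (v : R) :
  v^2 = u^2 -> focal_circle c inner_center (upper_vertex v).
Proof.
  intros hv. apply (ellipse_point_on_focal_circle a b); try lra.
  - exact (upper_vertex_on_ellipse v hv).
  - apply focal_height_root with (- (b^3/(c^2*s))).
    + exact vertex_heights_product.
    + exact inner_center_sum.
Qed.

Lemma lower_vertex_on_inner_circle (t : R) :
  t^2 = S^2 -> focal_circle c inner_center (lower_vertex t).
Proof.
  intros ht. apply (ellipse_point_on_focal_circle a b); try lra.
  - exact (lower_vertex_on_ellipse t ht).
  - apply focal_height_root with (b*s).
    + rewrite <- vertex_heights_product. unfold lower_vertex; cbn [snd]. ring.
    + rewrite inner_center_sum. unfold lower_vertex; cbn [snd]. ring.
Qed.

Lemma outer_radius_focal :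
  a^2 + (u^2 - 2)*c^2 <> 0 -> outer_radius^2 = c^2 + outer_center^2.
Proof.
  unfold outer_radius, outer_center. rewrite outer_denominator. intros hE.
  replace (c^2*u^2 - a^2) with (- (b^2 + c^2*s^2)) by (pose proof vertex_gap; lra).
  field. intros h. apply hE. rewrite Rpow_mult_distr in h. lra.
Qed.

(* Each outer vertex, the common point of the tangents at an upper and a lower
   vertex, lies on the outer circle: by Cramer its coordinates are
   (a (b^2 + c^2 s^2)/W, -b (v c^2 s - t)/W), and the defect is
   outer_vertex_identity divided by W^2. *)
Lemma outer_vertex_on_outer_circle (v t X Y : R) :
  a^2 + (u^2 - 2)*c^2 <> 0 -> v^2 = u^2 -> t^2 = S^2 ->
  on_tangent a b (upper_vertex v) (X, Y) -> on_tangent a b (lower_vertex t) (X, Y) ->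
  focal_circle c outer_center (X, Y).
Proof.
  unfold upper_vertex, lower_vertex. intros hE hv ht h1 h2.
  assert (hheights : b*s <> - (b^3/(c^2*s))).
  { assert (0 < b^3/(c^2*s))
      by (apply Rdiv_lt_0_compat; [apply pow_lt | apply Rmult_lt_0_compat; [apply pow_lt |]]; lra).
    assert (0 < b*s) by (apply Rmult_lt_0_compat; lra). lra. }
  destruct (tangent_intersection_coords a b _ _ _ _ X Y ltac:(lra) ltac:(lra) hheights h1 h2)
    as [hD [hX hY]].
  set (W := v*b^2 + t*s).
  assert (eD : a*v*(- (b^3/(c^2*s))) - a*t/(c^2*s)*(b*s) = - (a*b*W)/(c^2*s))
    by (unfold W; field; lra).
  rewrite eD in hD, hX, hY.
  assert (hW : W <> 0) by (intros h; apply hD; rewrite h; field; lra).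
  assert (hdelta : c^2*s^2 - b^2 <> 0) by (intros h; apply hE; rewrite outer_denominator, h; ring).
  assert (hk : outer_center * (c^2*s^2 - b^2) = 2*b*c^2*s).
  { unfold outer_center. rewrite outer_denominator. field. rewrite Rpow_mult_distr. exact hdelta. }
  unfold focal_circle; cbn [fst snd]. rewrite hX, hY. apply Rminus_diag_uniq.
  replace (_ - c^2) with
    ((a^2*(b^2 + c^2*s^2)^2 + b^2*(v*c^2*s - t)^2
      + 2*outer_center*b*(v*c^2*s - t)*(v*b^2 + t*s) - c^2*(v*b^2 + t*s)^2) / W^2)
    by (unfold W in *; field; repeat split; lra).
  rewrite outer_vertex_identity, (tangent_vertex_relation v t hv ht), hk.
  unfold Rdiv. ring.
Qed.

Lemma on_inner_circle (Q : R * R) :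
  focal_circle c inner_center Q -> on_circle (0, inner_center) inner_radius Q.
Proof. apply focal_circle_on_circle, inner_radius_focal. Qed.

Lemma on_outer_circle (Q : R * R) :
  a^2 + (u^2 - 2)*c^2 <> 0 -> focal_circle c outer_center Q ->
  on_circle (0, outer_center) (Rabs outer_radius) Q.
Proof.
  intros hE. apply focal_circle_on_circle. rewrite pow2_abs. exact (outer_radius_focal hE).
Qed.

End SelfIntersectedFourPeriodic.

Lemma four_periodic_vertices (a b u : R) :
  let c := cfoc a b in
  let s := sqrt (1 - u^2) in
  let S := sqrt (a^2*(a^2 - 2*b^2) - c^4*u^2) in
  P1 a b u = upper_vertex a b s u /\ P2 a b u = lower_vertex a b c s (- S) /\
  P3 a b u = upper_vertex a b s (- u) /\ P4 a b u = lower_vertex a b c s S.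
Proof.
  unfold P1, P2, P3, P4, upper_vertex, lower_vertex.
  repeat split; f_equal; unfold Rdiv; ring.
Qed.

Lemma admissible_parameters (a b u : R) :
  0 < b -> b < a -> a / b > sqrt 2 -> Rabs u < umax a b ->
  0 < cfoc a b /\ cfoc a b ^ 2 = a^2 - b^2 /\ u^2 < 1 /\
  cfoc a b ^ 4 * u^2 < a^2*(a^2 - 2*b^2).
Proof.
  intros hb hab hratio hu.
  assert (hab2 : 2*b^2 < a^2).
  { assert (hsq : sqrt 2 * b < a).
    { replace a with (a/b*b) by (field; lra). apply Rmult_lt_compat_r; lra. }
    assert (h2 : sqrt 2 ^ 2 = 2) by (apply pow2_sqrt; lra).
    assert (0 <= sqrt 2 * b) by (pose proof (sqrt_pos 2); nra).
    replace (2*b^2) with (sqrt 2 ^ 2 * b^2) by (rewrite h2; ring).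
    replace (sqrt 2 ^ 2 * b^2) with ((sqrt 2 * b)^2) by ring.
    nra. }
  assert (hc2 : cfoc a b ^ 2 = a^2 - b^2) by (apply pow2_sqrt; nra).
  assert (hc : 0 < cfoc a b) by (apply sqrt_lt_R0; nra).
  unfold umax in hu. set (c := cfoc a b) in *. set (q := sqrt (a^2 - 2*b^2)) in hu.
  assert (hq2 : q^2 = a^2 - 2*b^2) by (apply pow2_sqrt; lra).
  assert (hq : 0 <= q) by apply sqrt_pos.
  assert (hu2 : u^2 < (a/c^2*q)^2).
  { rewrite <- (pow2_abs u). pose proof (Rabs_pos u). nra. }
  assert (hS : c^4 * u^2 < a^2*(a^2 - 2*b^2)).
  { replace (a^2*(a^2 - 2*b^2)) with (c^4 * (a/c^2*q)^2) by (rewrite <- hq2; field; lra).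
    apply Rmult_lt_compat_l; [apply pow_lt|]; lra. }
  repeat split; try assumption.
  assert (c^4 = (a^2 - b^2)^2) by (rewrite <- hc2; ring).
  assert (0 < c^4) by (apply pow_lt; lra). nra.
Qed.

Theorem mainTheorem3 (a b u : R)
  (hb : 0 < b) (hab : b < a) (hratio : a / b > sqrt 2)
  (hu : Rabs u < umax a b) :
  let c := cfoc a b in
  let Cc := (0, (c^2*u^2 - a^2 + 2*b^2) / (2*b*sqrt (1 - u^2))) in
  let Rr := (a^2 - c^2*u^2) / (2*b*sqrt (1 - u^2)) in
  (on_circle Cc Rr (P1 a b u) /\ on_circle Cc Rr (P2 a b u) /\
   on_circle Cc Rr (P3 a b u) /\ on_circle Cc Rr (P4 a b u) /\
   on_circle Cc Rr (-c, 0) /\ on_circle Cc Rr (c, 0)) /\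
  (a^2 + (u^2 - 2)*c^2 <> 0 ->
   let Cc' := (0, - (2*b*c^2*sqrt (1 - u^2)) / (a^2 + (u^2 - 2)*c^2)) in
   let Rr' := c * (c^2*u^2 - a^2) / (a^2 + (u^2 - 2)*c^2) in
   (forall Q,
      tangent_intersection a b (P1 a b u) (P2 a b u) Q \/
      tangent_intersection a b (P2 a b u) (P3 a b u) Q \/
      tangent_intersection a b (P3 a b u) (P4 a b u) Q \/
      tangent_intersection a b (P4 a b u) (P1 a b u) Q ->
      on_circle Cc' (Rabs Rr') Q) /\
   on_circle Cc' (Rabs Rr') (-c, 0) /\ on_circle Cc' (Rabs Rr') (c, 0)).
Proof.
  intros c Cc Rr.
  destruct (admissible_parameters a b u hb hab hratio hu) as (hc & hc2 & hu1 & hcu).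
  destruct (four_periodic_vertices a b u) as (e1 & e2 & e3 & e4).
  rewrite e1, e2, e3, e4. fold c in hc, hc2, hcu |- *.
  set (s := sqrt (1 - u^2)) in *. set (S := sqrt (a^2*(a^2 - 2*b^2) - c^4*u^2)).
  assert (ha : 0 < a) by lra.
  assert (hs : 0 < s) by (apply sqrt_lt_R0; lra).
  assert (hs2 : s^2 = 1 - u^2) by (apply pow2_sqrt; lra).
  assert (hS2 : S^2 = a^2*(a^2 - 2*b^2) - c^4*u^2) by (apply pow2_sqrt; lra).
  assert (hu' : (- u)^2 = u^2) by ring.
  assert (hS' : (- S)^2 = S^2) by ring.
  split.
  - repeat split; apply on_inner_circle; auto;
      [ apply (upper_vertex_on_inner_circle a b c u s)
      | apply (lower_vertex_on_inner_circle a b c u s S)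
      | apply (upper_vertex_on_inner_circle a b c u s)
      | apply (lower_vertex_on_inner_circle a b c u s S)
      | apply focus_on_focal_circle; ring .. ]; auto.
  - intros hE. split; [| split; apply on_outer_circle; auto; apply focus_on_focal_circle; ring].
    intros [X Y] HQ. apply on_outer_circle; auto.
    destruct HQ as [[h1 h2] | [[h1 h2] | [[h1 h2] | [h1 h2]]]];
      [ apply outer_vertex_on_outer_circle with (S := S) (v := u) (t := - S)
      | apply outer_vertex_on_outer_circle with (S := S) (v := - u) (t := - S)
      | apply outer_vertex_on_outer_circle with (S := S) (v := - u) (t := S)
      | apply outer_vertex_on_outer_circle with (S := S) (v := u) (t := S) ]; auto.
Qed.
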